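(* Let $\Gamma$ be a connected signed graph with $n$ vertices and $m$ edges, with Laplacian eigenvalues $\mu_1\ge\cdots\ge\mu_n\ge 0$. Let $p$ be a positive integer and $k\in\{p,p-1\}$. Then the adjacency spectrum of $S_p^k(\Gamma)$, as a multiset, is: if $\Gamma$ is balanced: $0$ with multiplicity $(p-1)n+(k+1)m+2$, together with $\pm\sqrt{(p+1)(k+1)\mu_i}$ for $i=1,\dots,n-1$; if $\Gamma$ is unbalanced: $0$ with multiplicity $(p-1)n+(k+1)m$, together with $\pm\sqrt{(p+1)(k+1)\mu_i}$ for $i=1,\dots,n$.
   Context: A signed graph $\Gamma=(G,\sigma)$ is a simple graph $G$ with a sign function $\sigma:E(G)\to\{1,-1\}$; its adjacency matrix $A(\Gamma)$ has $(i,j)$ entry $\sigma(v_iv_j)$ if $v_iv_j\in E(G)$ and $0$ otherwise, and its Laplacian matrix is $L(\Gamma)=D(G)-A(\Gamma)$ with $D(G)$ the diagonal degree matrix. $\Gamma$ is balanced if every cycle has an even number of negative edges, unbalanced otherwise. Orientation: for $\Gamma$ with vertices $v_1,\dots,v_n$ and edges $e_1,\dots,e_m$, fix $\vartheta(v,e)\in\{1,-1\}$ for each vertex $v$ incident with edge $e$, such that for every edge $e=vw$, $\vartheta(v,e)\vartheta(w,e)=-\sigma(e)$. The signed graph $S_p^k(\Gamma)$ (for integers $p\ge1$, $k\ge 0$): its vertex set is $\{v_i^{(s)}:1\le i\le n,\ 0\le s\le p\}\cup\{e_j^{(t)}:1\le j\le m,\ 0\le t\le k\}$; its edges are exactly the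 pairs $v_i^{(s)}e_j^{(t)}$ with $v_i$ an end of $e_j$ in $G$, of sign $\vartheta(v_i,e_j)$. Equivalently, starting from the signed subdivision graph $S(\Gamma)$, one adds $p$ copies of each original vertex $v_i$ joined to the neighbours of $v_i$ with the same signs, and then $k$ copies of each edge-vertex $e_j$ joined to all (old and new) neighbours of $e_j$ with the same signs. It has $(p+1)n+(k+1)m$ vertices and $2(p+1)(k+1)m$ edges. *)

From mathcomp Require Import all_boot all_order all_algebra.
Set Implicit Arguments. Unset Strict Implicit. Unset Printing Implicit Defensive.
Import Order.TTheory GRing.Theory Num.Theory.
Local Open Scope ring_scope.

Section SignedGraph.
Variables (n m : nat) (ends : 'I_m -> 'I_n * 'I_n) (sigma : 'I_m -> int).

Definition joins (e : 'I_m) (i j : 'I_n) : bool :=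
  (((ends e).1 == i) && ((ends e).2 == j)) || (((ends e).1 == j) && ((ends e).2 == i)).

Definition incident (v : 'I_n) (e : 'I_m) : bool :=
  (v == (ends e).1) || (v == (ends e).2).

Definition is_signed_simple_graph : Prop :=
  (forall e, (ends e).1 != (ends e).2) /\
  (forall e f, joins e (ends f).1 (ends f).2 -> e = f) /\
  (forall e, sigma e = 1 \/ sigma e = -1).

Definition adj_rel : rel 'I_n := fun i j => [exists e, joins e i j].

Definition sg_connected : Prop := forall i j : 'I_n, connect adj_rel i j.

Definition edge_sign (i j : 'I_n) : int :=
  match [pick e | joins e i j] with Some e => sigma e | None => 0 end.

Definition sg_adjacency (R : nzRingType) : 'M[R]_n :=
  \matrix_(i, j) (edge_sign i j)%:~R.

Definition sg_degree (i : 'I_n) : nat := #|[set e | incident i e]|.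

Definition sg_laplacian (R : nzRingType) : 'M[R]_n :=
  diag_mx (\row_i (sg_degree i)%:R) - sg_adjacency R.

Definition is_graph_cycle (s : seq 'I_n) : bool :=
  [&& uniq s, (3 <= size s)%N & cycle adj_rel s].

Definition cycle_neg_edges (s : seq 'I_n) : nat :=
  count (fun ij : 'I_n * 'I_n => edge_sign ij.1 ij.2 == -1) (zip s (rot 1 s)).

Definition sg_balanced : Prop :=
  forall s, is_graph_cycle s -> ~~ odd (cycle_neg_edges s).

(* orientation theta (values only relevant on incident pairs) *)
Definition is_orientation (theta : 'I_n -> 'I_m -> int) : Prop :=
  (forall v e, incident v e -> theta v e = 1 \/ theta v e = -1) /\
  (forall e, theta (ends e).1 e * theta (ends e).2 e = - sigma e).

(* vertices of S_p^k: v_i^(s), 0<=s<=p, and e_j^(t), 0<=t<=k *)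
Definition SV (p k : nat) : finType := ('I_n * 'I_p.+1 + 'I_m * 'I_k.+1)%type.

Definition SV_adj (theta : 'I_n -> 'I_m -> int) (p k : nat) (a b : SV p k) : int :=
  match a, b with
  | inl (i, _), inr (j, _) => if incident i j then theta i j else 0
  | inr (j, _), inl (i, _) => if incident i j then theta i j else 0
  | _, _ => 0
  end.

Definition Spk_adjacency (R : nzRingType) (theta : 'I_n -> 'I_m -> int) (p k : nat)
  : 'M[R]_#|SV p k| :=
  \matrix_(a, b) (SV_adj theta (enum_val a) (enum_val b))%:~R.

End SignedGraph.

(* Every vertex of S_p^k(Gamma) is a copy of a vertex of the subdivision
   graph S(Gamma) with the same signed neighbourhood, so A(S_p^k) = P A P^T,
   where A = [[0, B], [B^T, 0]] is the adjacency matrix of S(Gamma), B the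
   incidence matrix of the orientation, and P the 0/1 matrix sending a copy to
   its original; moreover P^T P = diag((p+1) I_n, (k+1) I_m).  Sylvester's
   determinant identity reduces the characteristic polynomial of P A P^T to
   that of A P^T P, and a Schur complement reduces the latter to
   det(X^2 - (p+1)(k+1) B B^T), with B B^T = L(Gamma).  So each Laplacian
   eigenvalue mu >= 0 (L is a Gram matrix) yields the pair
   +-sqrt((p+1)(k+1) mu).  When Gamma is connected and balanced, a switching
   function gives a nonzero vector killed by B^T, so the smallest eigenvalue
   mu_n is 0 and its factor X^2 joins the power of X. *)

From mathcomp Require Import all_boot all_order all_algebra.
From mathcomp Require Import zify ring.
Set Implicit Arguments. Unset Strict Implicit. Unset Printing Implicit Defensive.
Import Order.TTheory GRing.Theory Num.Theory.
Local Open Scope ring_scope.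

Lemma zip_take (S T : Type) i (s : seq S) (t : seq T) :
  zip (take i s) (take i t) = take i (zip s t).
Proof. by elim: s t i => [|x s IH] [|y t] [|i] //=; rewrite IH. Qed.

Lemma zip_drop (S T : Type) i (s : seq S) (t : seq T) :
  zip (drop i s) (drop i t) = drop i (zip s t).
Proof.
by elim: s t i => [|x s IH] [|y t] [|i] //=; first [rewrite IH | case: (drop _ _)].
Qed.

Lemma zip_rot (S T : Type) i (s : seq S) (t : seq T) :
  size s = size t -> zip (rot i s) (rot i t) = rot i (zip s t).
Proof. by move=> st; rewrite /rot zip_cat ?size_drop ?st // zip_drop zip_take. Qed.

Lemma zip_rconsl (S T : Type) (s : seq S) (t : seq T) x :
  size s = size t -> zip (rcons s x) t = zip s t.
Proof. by elim: s t => [|y s IH] [|z t] //= [/IH ->]. Qed.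

Lemma not_uniq_cat (T : eqType) (s : seq T) :
  ~~ uniq s -> exists s1 x s2 s3, s = s1 ++ x :: s2 ++ x :: s3.
Proof.
elim: s => //= y s IH; rewrite negb_and negbK => /orP[/splitPr[s2 s3] | /IH].
  by exists [::], y, s2, s3.
by case=> s1 [x [s2 [s3 ->]]]; exists (y :: s1), x, s2, s3.
Qed.

Lemma det_scalar_sub_mulmxC (R : comNzRingType) a b (x : R)
    (U : 'M_(a, b)) (V : 'M_(b, a)) :
  x ^+ b * \det (x%:M - U *m V) = x ^+ a * \det (x%:M - V *m U).
Proof.
have E1 : block_mx x%:M U V 1%:M *m block_mx 1%:M 0 (-V) 1%:M =
          block_mx (x%:M - U *m V) U 0 1%:M.
  by rewrite mulmx_block !mulmx1 !mulmx0 !mul1mx mulmxN !add0r addrN.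
have E2 : block_mx 1%:M 0 (-V) x%:M *m block_mx x%:M U V 1%:M =
          block_mx x%:M U 0 (x%:M - V *m U).
  rewrite mulmx_block !mulmx1 !mul1mx !mul0mx !addr0 !mulNmx.
  by rewrite mul_mx_scalar mul_scalar_mx addNr addrC.
have := congr1 determinant E1; have := congr1 determinant E2.
rewrite !det_mulmx !det_lblock !det_ublock !det_scalar !expr1n !mul1r !mulr1.
by move=> ? <-.
Qed.

Lemma det_block_scalar (R : comNzRingType) a b (x : R)
    (U : 'M_(a, b)) (V : 'M_(b, a)) :
  x ^+ a * \det (block_mx x%:M U V x%:M) = x ^+ b * \det ((x * x)%:M - U *m V).
Proof.
have E : block_mx x%:M U V x%:M *m block_mx x%:M 0 (-V) 1%:M =
         block_mx ((x * x)%:M - U *m V) U 0 x%:M.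
  rewrite mulmx_block !mulmx1 !mulmx0 !add0r scalar_mxM.
  by congr block_mx; rewrite ?mulmxN ?mul_mx_scalar ?mul_scalar_mx ?addrN.
have := congr1 determinant E.
rewrite det_mulmx det_lblock det_ublock !det_scalar expr1n mulr1 mulrC => ->.
by rewrite mulrC.
Qed.

Section Rowsub.
Variables (R : pzSemiRingType) (N M : nat) (f : 'I_N -> 'I_M).

Lemma mxsub_rowsub1E (A : 'M[R]_M) : mxsub f f A = rowsub f 1%:M *m A *m (rowsub f 1%:M)^T.
Proof.
rewrite mul_rowsub_mx mul1mx trmx_mxsub trmx1 mulmx_colsub mulmx1.
by apply/matrixP => i j; rewrite !mxE.
Qed.

Lemma tr_rowsub1_mulmx :
  (rowsub f 1%:M)^T *m rowsub f 1%:M =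
  diag_mx (\row_c #|[pred a | f a == c]|%:R) :> 'M[R]_M.
Proof.
apply/matrixP => c d; rewrite !mxE.
under eq_bigr do rewrite !mxE.
have [<-|cd] := eqVneq c d.
  rewrite mulr1n -sum1_card natr_sum [RHS]big_mkcond /=.
  by apply: eq_bigr => a _; rewrite inE; case: (f a == c); rewrite ?mulr1 ?mul0r.
rewrite /= mulr0n big1 // => a _.
case: eqVneq => [-> | _]; last by rewrite mul0r.
by rewrite (negbTE cd) mulr0.
Qed.

End Rowsub.

Lemma eigenvalue_char_poly (F : fieldType) n (A : 'M[F]_n) (mu : 'I_n -> F) x :
  char_poly A = \prod_(i < n) ('X - (mu i)%:P) -> eigenvalue A x = (x \in codom mu).
Proof.
move=> charA; rewrite eigenvalue_root_char charA -(big_map mu predT (fun a => 'X - a%:P)).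
by rewrite root_prod_XsubC /codom /image_mem enumT.
Qed.

Lemma gram_eigenvalue_ge0 (R : realFieldType) n m (B : 'M[R]_(n, m)) x :
  eigenvalue (B *m B^T) x -> 0 <= x.
Proof.
case/eigenvalueP => v vBB v_neq0.
have norm2_ge0 l (w : 'rV[R]_l) : 0 <= (w *m w^T) 0 0.
  by rewrite mxE; apply: sumr_ge0 => j _; rewrite mxE -expr2 sqr_ge0.
have norm2_gt0 : 0 < (v *m v^T) 0 0.
  rewrite lt_def norm2_ge0 andbT; case/matrix0Pn: v_neq0 => a [j vj].
  rewrite (ord1 a) in vj; rewrite mxE (bigD1 j) //= mxE -expr2 paddr_eq0 ?sqr_ge0 //.
    by rewrite sqrf_eq0 (negbTE vj).
  by apply: sumr_ge0 => l _; rewrite mxE -expr2 sqr_ge0.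
have vBBv : ((v *m B) *m (v *m B)^T) 0 0 = x * (v *m v^T) 0 0.
  by rewrite trmx_mul mulmxA -(mulmxA v) vBB -scalemxAl mxE.
by rewrite -(pmulr_lge0 _ norm2_gt0) -vBBv norm2_ge0.
Qed.

Lemma det_sqr_sub_scale_char_poly (F : fieldType) n (A : 'M[F]_n) (c : F) (mu : 'I_n -> F) :
  c != 0 -> char_poly A = \prod_(i < n) ('X - (mu i)%:P) ->
  \det (('X * 'X)%:M - map_mx polyC (c *: A)) = \prod_(i < n) ('X * 'X - (c * mu i)%:P).
Proof.
(* [X^2 - c A] is [c] times the characteristic matrix of [A] at [X^2 / c]. *)
move=> c_neq0 charA; set q := (c^-1)%:P * ('X * 'X).
have cq : c%:P * (c^-1)%:P = 1 by rewrite -polyCM mulfV.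
have -> : ('X * 'X)%:M - map_mx polyC (c *: A) = c%:P *: map_mx (comp_poly q) (char_poly_mx A).
  apply/matrixP => i j; rewrite !mxE rmorphB /= rmorphMn /= comp_polyX comp_polyC.
  by rewrite mulrBr /q mulrnAr [c%:P * (_ * _)]mulrA cq mul1r polyCM.
rewrite detZ det_map_mx -/(char_poly A) charA rmorph_prod.
rewrite -{1}(card_ord n) -prodr_const -big_split; apply: eq_bigr => i _ /=.
by rewrite comp_polyB comp_polyX comp_polyC /q mulrBr [c%:P * (_ * _)]mulrA cq mul1r polyCM.
Qed.

Lemma mul_XsubC_XaddC_sqrt (R : rcfType) (a : R) : 0 <= a ->
  ('X - (Num.sqrt a)%:P) * ('X + (Num.sqrt a)%:P) = 'X * 'X - a%:P.
Proof. by move=> a_ge0; rewrite -{3}(sqr_sqrtr a_ge0) polyCM; ring. Qed.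

Lemma bigD1_ord_last (R : Type) (idx : R) (op : Monoid.com_law idx) n (F : 'I_n -> R)
    (i : 'I_n) : val i = n.-1 ->
  \big[op/idx]_(j < n) F j = op (F i) (\big[op/idx]_(j < n | (j < n.-1)%N) F j).
Proof.
move=> i_last; rewrite (bigD1 i) //; congr (op _ _); apply: eq_bigl => j.
by rewrite -val_eqE i_last /=; move: (ltn_ord i) (ltn_ord j); lia.
Qed.

Lemma card_enum_val_fiber (T rT : finType) (g : T -> rT) (c : rT) :
  #|[pred a : 'I_#|T| | g (enum_val a) == c]| = #|[pred v | g v == c]|.
Proof.
rewrite -[RHS](on_card_preimset (f := enum_val) (onW_bij _ (enum_val_bij T))).
by apply: eq_card => a; rewrite !inE.
Qed.

Section SignedGraph.
Variables (n m : nat) (ends : 'I_m -> 'I_n * 'I_n) (sigma : 'I_m -> int).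
Hypothesis simple : is_signed_simple_graph ends sigma.

Local Notation adj := (adj_rel ends).
Local Notation sgn := (edge_sign ends sigma).
Local Notation neg_edges := (cycle_neg_edges ends sigma).

Lemma joins_sym e i j : joins ends e i j = joins ends e j i.
Proof. by rewrite /joins orbC. Qed.

Lemma edge_sign_sym i j : sgn i j = sgn j i.
Proof. by rewrite /edge_sign (eq_pick (fun e => joins_sym e i j)). Qed.

Lemma adj_rel_sym : symmetric adj.
Proof. by move=> i j; apply/existsP/existsP => -[e]; exists e; rewrite joins_sym. Qed.

Lemma adj_rel_irr i : ~~ adj i i.
Proof.
apply/existsP => -[e]; rewrite /joins orbb => /andP[/eqP e1 /eqP e2].
by have := simple.1 e; rewrite e1 e2 eqxx.
Qed.

Lemma adj_rel_ends e : adj (ends e).1 (ends e).2.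
Proof. by apply/existsP; exists e; rewrite /joins !eqxx. Qed.

Lemma edge_sign_ends e : sgn (ends e).1 (ends e).2 = sigma e.
Proof.
rewrite /edge_sign; case: pickP => [f /simple.2.1 -> // | /(_ e)].
by rewrite /joins !eqxx.
Qed.

Lemma cycle_neg_edges_rot i s : neg_edges (rot i s) = neg_edges s.
Proof.
rewrite /cycle_neg_edges rot_rot zip_rot ?size_rot //.
by apply/permP; rewrite perm_rot.
Qed.

Lemma cycle_neg_edges_repeat x s1 s2 :
  neg_edges (x :: s1 ++ x :: s2) = (neg_edges (x :: s1) + neg_edges (x :: s2))%N.
Proof.
rewrite /cycle_neg_edges !rot1_cons.
have -> : rcons (s1 ++ x :: s2) x = rcons s1 x ++ rcons s2 x.
  by rewrite rcons_cat /= cat_rcons.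
by rewrite -cat_cons zip_cat ?size_rcons // count_cat.
Qed.

Lemma cycle_repeat x s1 s2 :
  cycle adj (x :: s1 ++ x :: s2) -> cycle adj (x :: s1) /\ cycle adj (x :: s2).
Proof.
rewrite /= rcons_cat cat_path /= rcons_path => /and3P[p1 a p2].
by rewrite rcons_path p1 a p2.
Qed.

(* The signed double cover: a walk lifted from [(x, b)] flips the bit at every
   negative edge.  Balance makes the bit a function of the vertex (a switching
   function), since closed walks then have an even number of negative edges. *)
Definition signed_cover : rel ('I_n * bool) :=
  fun a b => adj a.1 b.1 && (b.2 == a.2 (+) (sgn a.1 b.1 == -1)).

Lemma signed_cover_sym : symmetric signed_cover.
Proof.
move=> [x b] [y c]; rewrite /signed_cover /= adj_rel_sym edge_sign_sym.
by congr (_ && _); apply/eqP/eqP => ->; rewrite addbK.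
Qed.

Lemma signed_cover_path x b s : path signed_cover (x, b) s ->
  path adj x (map fst s) /\
  (last (x, b) s).2 = b (+) odd (count (fun ij => sgn ij.1 ij.2 == -1)
                                      (zip (x :: map fst s) (map fst s))).
Proof.
elim: s x b => [|[y c] s IH] x b /=; first by rewrite addbF.
case/andP=> /andP[/= xy /eqP->] /IH[ys ->]; split; first by rewrite xy.
by rewrite oddD addbA; case: (sgn x y == -1).
Qed.

Lemma signed_cover_lift x b s : path adj x s ->
  exists c, connect signed_cover (x, b) (last x s, c).
Proof.
elim: s x b => [|y s IH] x b /=; first by exists b.
case/andP=> xy /(IH _ (b (+) (sgn x y == -1)))[c yc].
by exists c; apply: connect_trans yc; apply: connect1; rewrite /signed_cover /= xy eqxx.
Qed.

Section Balanced.
Hypothesis balanced : sg_balanced ends sigma.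

Lemma balanced_closed_walk_even s : cycle adj s -> ~~ odd (neg_edges s).
Proof.
elim: {s}_.+1 {-2}s (ltnSn (size s)) => // N IH s lt_sN cyc_s.
have [uniq_s | /not_uniq_cat[s1 [x [s2 [s3 def_s]]]]] := boolP (uniq s).
  case: s lt_sN cyc_s uniq_s => [|x [|y [|z t]]] // _ cyc_s uniq_s.
  - by move: cyc_s; rewrite /= andbT (negbTE (adj_rel_irr x)).
  - by rewrite /cycle_neg_edges /= (edge_sign_sym y x); case: (sgn x y == -1).
  - by apply: balanced; rewrite /is_graph_cycle uniq_s cyc_s.
have rot_s : rot (size s1) s = x :: s2 ++ x :: s3 ++ s1.
  by rewrite def_s rot_size_cat /= -catA.
rewrite -(cycle_neg_edges_rot (size s1)) rot_s cycle_neg_edges_repeat oddD.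
rewrite -(rot_cycle (size s1)) rot_s in cyc_s.
have [cyc1 cyc2] := cycle_repeat cyc_s.
rewrite -(size_rot (size s1)) rot_s /= size_cat /= size_cat in lt_sN.
by rewrite (negbTE (IH _ _ cyc1)) ?(negbTE (IH _ _ cyc2)) //= ?size_cat; lia.
Qed.

Lemma signed_cover_fiber x b c : connect signed_cover (x, b) (x, c) -> c = b.
Proof.
case/connectP=> s /signed_cover_path[walk parity] last_s.
have closed : last x (map fst s) = x by rewrite (last_map fst s (x, b)) -last_s.
rewrite -[c]/((x, c).2) last_s parity.
case/lastP: (map fst s) walk closed => [|ys y] /=; first by rewrite addbF.
rewrite last_rcons => walk y_x; rewrite y_x in walk *.
rewrite -/(rcons (x :: ys) x) zip_rconsl ?size_rcons // -rot1_cons.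
by rewrite (negbTE (@balanced_closed_walk_even (x :: ys) walk)) addbF.
Qed.

Lemma balanced_switching (r : 'I_n) : sg_connected ends ->
  exists f : 'I_n -> bool, forall e, f (ends e).1 (+) f (ends e).2 = (sigma e == -1).
Proof.
move=> connected; pose f v := connect signed_cover (r, false) (v, true).
have cover_sym : connect_sym signed_cover := sym_connect_sym signed_cover_sym.
have f_uniq v b c : connect signed_cover (r, false) (v, b) ->
    connect signed_cover (r, false) (v, c) -> c = b.
  move=> rb rc; apply: signed_cover_fiber.
  by rewrite cover_sym in rb; apply: connect_trans rb rc.
have f_reach v : connect signed_cover (r, false) (v, f v).
  have [b rb] : exists b, connect signed_cover (r, false) (v, b).
    by case/connectP: (connected r v) => s walk ->; apply: signed_cover_lift.
  rewrite /f; case: (boolP (connect _ _ (v, true))) => // /negbTE vt.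
  by case: b rb => // rb; rewrite rb in vt.
exists f => e; set u := (ends e).1; set w := (ends e).2.
have uw : signed_cover (u, f u) (w, f u (+) (sigma e == -1)).
  by rewrite /signed_cover /= adj_rel_ends edge_sign_ends eqxx.
by rewrite -(f_uniq _ _ _ (f_reach w) (connect_trans (f_reach u) (connect1 uw))) addKb.
Qed.

End Balanced.

End SignedGraph.

Section Orientation.
Variables (n m : nat) (ends : 'I_m -> 'I_n * 'I_n) (sigma : 'I_m -> int).
Variable theta : 'I_n -> 'I_m -> int.
Hypothesis simple : is_signed_simple_graph ends sigma.
Hypothesis orientation : is_orientation ends sigma theta.

Lemma incident_joins i j e : i != j ->
  incident ends i e && incident ends j e = joins ends e i j.
Proof.
rewrite /incident /joins => ij; apply/idP/idP; last first.
  by case/orP=> /andP[/eqP <- /eqP <-]; rewrite !eqxx ?orbT.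
case/andP=> /orP[] /eqP ei /orP[] /eqP ej; subst i j; rewrite ?eqxx ?orbT //.
all: by rewrite eqxx in ij.
Qed.

Lemma joins_inj e f i j : joins ends e i j -> joins ends f i j -> e = f.
Proof.
move=> je jf; apply/esym/simple.2.1.
by case/orP: je => /andP[/eqP-> /eqP->] //; rewrite joins_sym.
Qed.

Lemma edge_sign_diag i : edge_sign ends sigma i i = 0.
Proof.
rewrite /edge_sign; case: pickP => // e; rewrite /joins orbb => /andP[/eqP e1 /eqP e2].
by have := simple.1 e; rewrite e1 e2 eqxx.
Qed.

Lemma orientation_sqr i e : incident ends i e -> theta i e * theta i e = 1.
Proof. by case/orientation.1 => ->. Qed.

Lemma orientation_joins i j e : joins ends e i j -> theta i e * theta j e = - sigma e.
Proof. by case/orP=> /andP[/eqP<- /eqP<-]; rewrite -orientation.2 // mulrC. Qed.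

Definition incidence_mx (R : nzRingType) : 'M[R]_(n, m) :=
  \matrix_(i, e) (if incident ends i e then theta i e else 0)%:~R.

Lemma sg_laplacianE (R : nzRingType) :
  sg_laplacian ends sigma R = incidence_mx R *m (incidence_mx R)^T.
Proof.
apply/matrixP => i j; rewrite !mxE.
under eq_bigr do rewrite !mxE.
have [<-|ij] := eqVneq i j.
  rewrite edge_sign_diag mulr1n subr0 /sg_degree cardsE -sum1_card natr_sum.
  rewrite big_mkcond /=; apply: eq_bigr => e _; change (e \in _) with (incident ends i e).
  by case: ifP => ie; rewrite ?mulr0 // -intrM orientation_sqr.
rewrite /= mulr0n sub0r.
have term e : (if incident ends i e then theta i e else 0) *
              (if incident ends j e then theta j e else 0) =
              if joins ends e i j then theta i e * theta j e else 0.
  by rewrite -incident_joins //; do 2 case: (incident ends _ e); rewrite ?mulr0 ?mul0r.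
under eq_bigr do rewrite -intrM term.
rewrite /edge_sign; case: pickP => [e je | nj]; last first.
  by rewrite big1 ?oppr0 // => e _; rewrite nj.
rewrite (bigD1 e) //= je big1 ?addr0 => [|f fe]; last first.
  by case: ifP => // jf; rewrite (joins_inj jf je) eqxx in fe.
by rewrite orientation_joins // intrN.
Qed.

Lemma switching_row_mul_incidence (R : nzRingType) (f : 'I_n -> bool) :
  (forall e, f (ends e).1 (+) f (ends e).2 = (sigma e == -1)) ->
  \row_i (if f i then -1 else 1) *m incidence_mx R = 0.
Proof.
move=> switching; apply/matrixP => a e; rewrite !mxE.
under eq_bigr do rewrite !mxE.
have [u w] : incident ends (ends e).1 e /\ incident ends (ends e).2 e.
  by rewrite /incident !eqxx orbT.
rewrite (bigD1 (ends e).1) // (bigD1 (ends e).2) /=; last by rewrite eq_sym simple.1.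
rewrite big1 ?addr0 => [|i /andP[iw iu]]; last first.
  by rewrite /incident (negbTE iu) (negbTE iw) mulr0.
have := orientation.2 e; have := switching e; rewrite u w.
case: (orientation.1 _ e u) => ->; case: (orientation.1 _ e w) => ->;
  case: (simple.2.2 e) => ->; case: (f (ends e).1); case: (f (ends e).2) => //= _ _;
  by rewrite ?mulN1r ?mul1r ?opprK ?addrN ?addNr.
Qed.

Lemma balanced_laplacian_eigenvalue0 (F : fieldType) (r : 'I_n) :
  sg_connected ends -> sg_balanced ends sigma -> eigenvalue (sg_laplacian ends sigma F) 0.
Proof.
move=> connected balanced; have [f switching] := balanced_switching simple balanced r connected.
apply/eigenvalueP; exists (\row_i (if f i then -1 else 1)).
  by rewrite sg_laplacianE mulmxA switching_row_mul_incidence // mul0mx scale0r.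
by apply/rV0Pn; exists r; rewrite mxE; case: (f r); rewrite ?oppr_eq0 oner_eq0.
Qed.

End Orientation.

Section Subdivision.
Variables (n m : nat) (ends : 'I_m -> 'I_n * 'I_n) (theta : 'I_n -> 'I_m -> int).
Variables (p k : nat).
Local Notation B R := (incidence_mx ends theta R).

(* The vertex of S(Gamma) copied by a vertex of S_p^k(Gamma); the vertices of
   S(Gamma) are indexed by ['I_(n + m)], original vertices first. *)
Definition collapse (v : SV n m p k) : 'I_(n + m) :=
  match v with inl (i, _) => lshift m i | inr (e, _) => rshift n e end.

Lemma card_collapse_lshift i : #|[pred v | collapse v == lshift m i]| = p.+1.
Proof.
rewrite -[p.+1]card_ord -(card_codom (f := fun s => inl (i, s) : SV n m p k)).
  apply: eq_card => -[[i' s]|[e t]]; rewrite inE /= ?eq_rlshift.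
    rewrite eq_lshift; apply/eqP/codomP => [-> | [s' [-> _]]] //; by exists s.
  by apply/esym/codomP => -[].
by move=> s s' [].
Qed.

Lemma card_collapse_rshift e : #|[pred v | collapse v == rshift n e]| = k.+1.
Proof.
rewrite -[k.+1]card_ord -(card_codom (f := fun t => inr (e, t) : SV n m p k)).
  apply: eq_card => -[[i s]|[e' t]]; rewrite inE /= ?eq_lrshift.
    by apply/esym/codomP => -[].
  rewrite eq_rshift; apply/eqP/codomP => [-> | [t' [-> _]]] //; by exists t.
by move=> t t' [].
Qed.

Section Matrices.
Variable R : nzRingType.

Definition collapse_mx : 'M[R]_(#|SV n m p k|, n + m) :=
  rowsub (fun a => collapse (enum_val a)) 1%:M.

Lemma Spk_adjacencyE :
  Spk_adjacency ends R theta p k = collapse_mx *m block_mx 0 (B R) (B R)^T 0 *m collapse_mx^T.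
Proof.
rewrite /collapse_mx -mxsub_rowsub1E; apply/matrixP => a b; rewrite mxE [RHS]mxE /=.
case: (enum_val a) => [[i s]|[e t]]; case: (enum_val b) => [[i' s']|[e' t']];
  by rewrite /= ?block_mxEul ?block_mxEur ?block_mxEdl ?block_mxEdr ?mxE.
Qed.

Lemma collapse_mx_gram :
  collapse_mx^T *m collapse_mx = block_mx (p.+1)%:R%:M 0 0 (k.+1)%:R%:M.
Proof.
rewrite /collapse_mx tr_rowsub1_mulmx; apply/matrixP => c d.
rewrite -(splitK c) -(splitK d).
case: (split c) => c'; case: (split d) => d';
  rewrite ?block_mxEul ?block_mxEur ?block_mxEdl ?block_mxEdr !mxE /=
          ?eq_lshift ?eq_rshift ?eq_lrshift ?eq_rlshift ?mulr0n //
          card_enum_val_fiber ?card_collapse_lshift ?card_collapse_rshift //.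
Qed.

End Matrices.

Lemma char_poly_Spk_adjacency (R : comNzRingType) : (0 < p)%N ->
  char_poly (Spk_adjacency ends R theta p k) =
  'X ^+ ((p - 1) * n + k.+1 * m) *
  \det (('X * 'X)%:M - map_mx polyC ((p.+1 * k.+1)%:R *: (B R *m (B R)^T))).
Proof.
move=> p_gt0; set B := B R; set P := map_mx polyC (collapse_mx R).
set V := map_mx polyC (block_mx 0 B B^T 0 *m (collapse_mx R)^T).
have sylvester := det_scalar_sub_mulmxC 'X P V.
have VP : 'X%:M - V *m P = block_mx 'X%:M (- map_mx polyC ((k.+1)%:R *: B))
                                   (- map_mx polyC ((p.+1)%:R *: B^T)) 'X%:M.
  rewrite -map_mxM -mulmxA collapse_mx_gram mulmx_block !mulmx0 !mul0mx !addr0 !add0r.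
  rewrite !mul_mx_scalar map_block_mx !map_mx0 scalar_mx_block opp_block_mx add_block_mx.
  by rewrite !subr0 !sub0r.
rewrite VP in sylvester.
have := det_block_scalar 'X (- map_mx polyC ((k.+1)%:R *: B)) (- map_mx polyC ((p.+1)%:R *: B^T)).
rewrite mulNmx mulmxN opprK -map_mxM -scalemxAl -scalemxAr scalerA -natrM mulnC => schur.
have card_SV : #|SV n m p k| = (p.+1 * n + k.+1 * m)%N.
  by rewrite card_sum !card_prod !card_ord mulnC [(m * _)%N]mulnC.
apply: (monic_lreg (monicXn R (n + (n + m)))).
rewrite /char_poly /char_poly_mx Spk_adjacencyE -mulmxA map_mxM -/P -/V.
rewrite exprD -mulrA sylvester mulrCA schur mulrA -!exprD mulrA -!exprD card_SV.
by congr ('X ^+ _ * _); case: p p_gt0 => // p' _; rewrite subn1 /=; lia.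
Qed.

End Subdivision.

Theorem theorem4p4 (R : rcfType) (n m : nat) (ends : 'I_m -> 'I_n * 'I_n)
  (sigma : 'I_m -> int) (theta : 'I_n -> 'I_m -> int) (p k : nat)
  (mu : 'I_n -> R) :
  is_signed_simple_graph ends sigma ->
  (0 < n)%N ->
  sg_connected ends ->
  is_orientation ends sigma theta ->
  (forall i j : 'I_n, (i <= j)%N -> mu j <= mu i) ->
  char_poly (sg_laplacian ends sigma R) = \prod_(i < n) ('X - (mu i)%:P) ->
  (0 < p)%N ->
  (k = p \/ k = p.-1) ->
  (sg_balanced ends sigma ->
     char_poly (Spk_adjacency ends R theta p k) =
     'X ^+ ((p - 1) * n + k.+1 * m + 2)%N *
     \prod_(i < n | (i < n.-1)%N)
        (('X - (Num.sqrt ((p.+1 * k.+1)%:R * mu i))%:P) *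
         ('X + (Num.sqrt ((p.+1 * k.+1)%:R * mu i))%:P))) /\
  (~ sg_balanced ends sigma ->
     char_poly (Spk_adjacency ends R theta p k) =
     'X ^+ ((p - 1) * n + k.+1 * m)%N *
     \prod_(i < n)
        (('X - (Num.sqrt ((p.+1 * k.+1)%:R * mu i))%:P) *
         ('X + (Num.sqrt ((p.+1 * k.+1)%:R * mu i))%:P))).
Proof.
move=> simple n_gt0 connected orientation mu_sorted charL p_gt0 _.
have laplacianE := sg_laplacianE simple orientation R.
have charA := char_poly_Spk_adjacency ends theta k R p_gt0.
rewrite -laplacianE (det_sqr_sub_scale_char_poly _ charL) ?pnatr_eq0 // in charA.
have mu_ge0 i : 0 <= mu i.
  apply: (gram_eigenvalue_ge0 (B := incidence_mx ends theta R)).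
  by rewrite -laplacianE (eigenvalue_char_poly _ charL) codom_f.
have factor i : ('X - (Num.sqrt ((p.+1 * k.+1)%:R * mu i))%:P) *
                ('X + (Num.sqrt ((p.+1 * k.+1)%:R * mu i))%:P) =
                'X * 'X - ((p.+1 * k.+1)%:R * mu i)%:P.
  by rewrite mul_XsubC_XaddC_sqrt ?mulr_ge0 ?ler0n.
split=> [balanced | _]; rewrite charA; under [in RHS]eq_bigr do rewrite factor; last by [].
have last_lt : (n.-1 < n)%N by rewrite ltn_predL.
pose i_last := Ordinal last_lt.
have mu_last : mu i_last = 0.
  have /codomP[i0 mu_i0] : 0 \in codom mu.
    rewrite -(eigenvalue_char_poly _ charL).
    exact: balanced_laplacian_eigenvalue0 simple orientation R i_last connected balanced.
  apply/le_anti; rewrite mu_ge0 andbT mu_i0 mu_sorted //.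
  by rewrite -ltnS prednK.
rewrite (bigD1_ord_last _ _ (erefl : val i_last = n.-1)) /= mu_last mulr0 polyC0 subr0.
by rewrite [in RHS]exprD -mulrA expr2.
Qed.
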